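(* Let the data $y\in\mathbb{R}^n$, $X\in\mathbb{R}^{n\times p}$, $Z\in\mathbb{R}^{n\times q}$ be fixed, with $Z^TZ$ and $X^TP_ZX$ non-singular, and thin SVDs $X=U_X\Sigma_XV_X^T$, $Z=U_Z\Sigma_ZV_Z^T$. Let $\widehat e=y-X\widehat\beta_{2SLS}$ with $\widehat\beta_{2SLS}=(X^TP_ZX)^{-1}X^TP_Zy$, and let $\Pi\in\mathbb{R}^{m\times n}$ be random. Given $\varepsilon_1,\varepsilon_2,\varepsilon_3,\delta\in(0,1/2)$, suppose that jointly with probability at least $1-\delta$: $\|U_Z^T\Pi^T\Pi U_Z-I_q\|_2\le\varepsilon_1$, $\|U_Z^T\Pi^T\Pi U_X-U_Z^TU_X\|_2\le\varepsilon_2$, $\|U_Z^T\Pi^T\Pi\widehat e-U_Z^T\widehat e\|\le\varepsilon_3\|\widehat e\|$; and that $\sigma_{\min}^2(U_Z^TU_X)\ge 2f_1(\varepsilon_1,\varepsilon_2)$. Let $\widetilde A:=U_X^T\Pi^T\Pi U_Z(U_Z^T\Pi^T\Pi U_Z)^{-1}U_Z^T\Pi^T\Pi U_X$. Then with probability at least $1-\delta$, $\sigma_{\min}(\widetilde A)\ge\frac12\sigma_{\min}^2(U_Z^TU_X)$.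
   Context: $P_Z=Z(Z^TZ)^{-1}Z^T$; $f_1(\varepsilon_1,\varepsilon_2):=[\varepsilon_1+\varepsilon_2(\varepsilon_2+2)]/(1-\varepsilon_1)$. $\|\cdot\|_2$ is the spectral norm, $\sigma_{\min}$ the smallest singular value. *)

From HB Require Import structures.
From mathcomp Require Import all_boot all_order all_algebra.
From mathcomp Require Import all_classical all_reals all_analysis.
Set Implicit Arguments. Unset Strict Implicit. Unset Printing Implicit Defensive.
Import Order.TTheory GRing.Theory Num.Theory.
Local Open Scope classical_set_scope.
Local Open Scope ring_scope.

Definition vnorm (R : realType) (k : nat) (v : 'cV[R]_k) : R :=
  Num.sqrt (\sum_(i < k) v i 0 ^+ 2).

Definition usphere (R : realType) (k : nat) : set 'cV[R]_k :=
  [set v | vnorm v = 1].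

Definition spnorm (R : realType) (a b : nat) (A : 'M[R]_(a, b)) : R :=
  sup [set vnorm (A *m v) | v in @usphere R b].

(* smallest singular value of A (a x b with a >= b): inf_{||v||=1} ||A v|| *)
Definition smin (R : realType) (a b : nat) (A : 'M[R]_(a, b)) : R :=
  inf [set vnorm (A *m v) | v in @usphere R b].

Definition projmx (R : realType) (n q : nat) (Z : 'M[R]_(n, q)) : 'M[R]_n :=
  Z *m invmx (Z^T *m Z) *m Z^T.

Definition f1 (R : realType) (e1 e2 : R) : R := (e1 + e2 * (e2 + 2)) / (1 - e1).

Definition thin_svd (R : realType) (n k : nat) (A : 'M[R]_(n, k))
  (U : 'M[R]_(n, k)) (S : 'M[R]_k) (V : 'M[R]_k) : Prop :=
  [/\ A = U *m S *m V^T, U^T *m U = 1%:M, V^T *m V = 1%:M,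
      is_diag_mx S & forall i, 0 <= S i i].

(* Write B := U_Z^T Pi^T Pi U_Z, C := U_Z^T Pi^T Pi U_X and G := U_Z^T U_X, so that the
   matrix of interest is C^T B^-1 C and, for a unit vector v,
   ||C^T B^-1 C v|| >= v^T C^T B^-1 C v = <u, B^-1 u> with u := C v.  Since ||B - I|| <= e1,
   the vectors u and w := B^-1 u differ by (B - I) w, and expanding ||u - w||^2 yields
   <u, w> >= ||u||^2 / (1 + e1).  Finally ||u|| >= ||G v|| - e2 >= smin G - e2, and the
   hypothesis smin G^2 >= 2 f1(e1, e2), together with smin G <= 1, is exactly what makes
   (smin G - e2)^2 / (1 + e1) >= smin G^2 / 2.  The probabilistic statement follows on the
   same event. *)
From HB Require Import structures.
From mathcomp Require Import all_boot all_order all_algebra.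
From mathcomp Require Import all_classical all_reals all_analysis.
From mathcomp Require Import ring lra.
Set Implicit Arguments. Unset Strict Implicit. Unset Printing Implicit Defensive.
Import Order.TTheory GRing.Theory Num.Theory.
Local Open Scope classical_set_scope.
Local Open Scope ring_scope.

Section EuclideanGeometry.
Variable R : realType.

Definition vdot k (x y : 'cV[R]_k) : R := \sum_i x i 0 * y i 0.

Lemma vdotC k (x y : 'cV[R]_k) : vdot x y = vdot y x.
Proof. by apply: eq_bigr => i _; rewrite mulrC. Qed.

Lemma vdot0l k (y : 'cV[R]_k) : vdot 0 y = 0.
Proof. by rewrite /vdot big1 // => i _; rewrite mxE mul0r. Qed.

Lemma vdotDl k (x y z : 'cV[R]_k) : vdot (x + y) z = vdot x z + vdot y z.
Proof. by rewrite /vdot -big_split; apply: eq_bigr => i _; rewrite mxE mulrDl. Qed.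

Lemma vdotNl k (x z : 'cV[R]_k) : vdot (- x) z = - vdot x z.
Proof. by rewrite /vdot -sumrN; apply: eq_bigr => i _; rewrite mxE mulNr. Qed.

Lemma vdotZl k c (x z : 'cV[R]_k) : vdot (c *: x) z = c * vdot x z.
Proof. by rewrite /vdot mulr_sumr; apply: eq_bigr => i _; rewrite mxE mulrA. Qed.

Lemma vdotDr k (x y z : 'cV[R]_k) : vdot z (x + y) = vdot z x + vdot z y.
Proof. by rewrite !(vdotC z) vdotDl. Qed.

Lemma vdotNr k (x z : 'cV[R]_k) : vdot z (- x) = - vdot z x.
Proof. by rewrite !(vdotC z) vdotNl. Qed.

Lemma vdotZr k c (x z : 'cV[R]_k) : vdot z (c *: x) = c * vdot z x.
Proof. by rewrite !(vdotC z) vdotZl. Qed.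

Lemma vdot_mulmxl k l (A : 'M[R]_(k, l)) x y : vdot (A *m x) y = vdot x (A^T *m y).
Proof.
have vdotE a (s t : 'cV[R]_a) : vdot s t = (s^T *m t) 0 0.
  by rewrite mxE; apply: eq_bigr => i _; rewrite mxE.
by rewrite !vdotE trmx_mul mulmxA.
Qed.

Lemma vdot_ge0 k (x : 'cV[R]_k) : 0 <= vdot x x.
Proof. by apply: sumr_ge0 => i _; rewrite -expr2 sqr_ge0. Qed.

Lemma vdot_eq0 k (x : 'cV[R]_k) : (vdot x x == 0) = (x == 0).
Proof.
apply/eqP/eqP => [x0|->]; last exact: vdot0l.
apply/matrixP => i j; rewrite (ord1 j) mxE.
have /eqP := psumr_eq0P (fun l _ => sqr_ge0 (x l 0)) x0 (i := i) isT.
by rewrite mulf_eq0 orbb => /eqP.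
Qed.

Lemma vdot_sqr_le k (x y : 'cV[R]_k) : vdot x y ^+ 2 <= vdot x x * vdot y y.
Proof.
have [/eqP|xx0] := eqVneq (vdot x x) 0.
  by rewrite vdot_eq0 => /eqP->; rewrite !vdot0l expr2 !mul0r.
have xx_gt0 : 0 < vdot x x by rewrite lt_def xx0 vdot_ge0.
(* expand the nonnegative square ||<x,x> y - <x,y> x||^2 *)
have := vdot_ge0 (vdot x x *: y - vdot x y *: x).
rewrite !(vdotDl, vdotDr, vdotNl, vdotNr, vdotZl, vdotZr) (vdotC y x) => h.
by rewrite -subr_ge0 -(pmulr_rge0 _ xx_gt0); nra.
Qed.

Lemma vnorm_sqr k (x : 'cV[R]_k) : vnorm x ^+ 2 = vdot x x.
Proof.
rewrite /vnorm sqr_sqrtr; last by apply: sumr_ge0 => i _; rewrite sqr_ge0.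
by apply: eq_bigr => i _; rewrite expr2.
Qed.

Lemma vnorm_ge0 k (x : 'cV[R]_k) : 0 <= vnorm x.
Proof. exact: sqrtr_ge0. Qed.

Lemma vnorm_gt0 k (x : 'cV[R]_k) : (0 < vnorm x) = (x != 0).
Proof. by rewrite lt_def vnorm_ge0 andbT -sqrf_eq0 vnorm_sqr vdot_eq0. Qed.

Lemma vnorm0 k : vnorm (0 : 'cV[R]_k) = 0.
Proof. by apply/eqP; rewrite -sqrf_eq0 vnorm_sqr vdot0l. Qed.

Lemma vnormZ k c (x : 'cV[R]_k) : vnorm (c *: x) = `|c| * vnorm x.
Proof.
apply: (@pexpIrn _ 2) => //; rewrite ?nnegrE ?mulr_ge0 ?vnorm_ge0 //.
by rewrite exprMn real_normK ?num_real // !vnorm_sqr vdotZl vdotZr mulrA -expr2.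
Qed.

Lemma vnormN k (x : 'cV[R]_k) : vnorm (- x) = vnorm x.
Proof. by rewrite -scaleN1r vnormZ normrN normr1 mul1r. Qed.

Lemma vdot_le_vnorm k (x y : 'cV[R]_k) : vdot x y <= vnorm x * vnorm y.
Proof.
apply: le_trans (ler_norm _) _.
rewrite -(@ler_pXn2r _ 2) ?nnegrE ?mulr_ge0 ?vnorm_ge0 //.
by rewrite real_normK ?num_real // exprMn !vnorm_sqr vdot_sqr_le.
Qed.

Lemma ler_vnormD k (x y : 'cV[R]_k) : vnorm (x + y) <= vnorm x + vnorm y.
Proof.
have : vnorm (x + y) ^+ 2 <= (vnorm x + vnorm y) ^+ 2.
  rewrite vnorm_sqr !(vdotDl, vdotDr) (vdotC y x) sqrrD -!vnorm_sqr.
  by have := vdot_le_vnorm x y; lra.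
by rewrite ler_pXn2r ?nnegrE ?addr_ge0 ?vnorm_ge0.
Qed.

Lemma vnorm_isometry a b (U : 'M[R]_(a, b)) x :
  U^T *m U = 1%:M -> vnorm (U *m x) = vnorm x.
Proof.
move=> hU; apply: (@pexpIrn _ 2) => //; rewrite ?nnegrE ?vnorm_ge0 //.
by rewrite !vnorm_sqr vdot_mulmxl mulmxA hU mul1mx.
Qed.

Lemma vnorm_trmx_orthonormal_le a b (U : 'M[R]_(a, b)) x :
  U^T *m U = 1%:M -> vnorm (U^T *m x) <= vnorm x.
Proof.
move=> hU; set y := U^T *m x.
have xUy : vdot x (U *m y) = vdot y y by rewrite vdotC vdot_mulmxl.
have UyUy : vdot (U *m y) (U *m y) = vdot y y by rewrite vdot_mulmxl mulmxA hU mul1mx.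
have := vdot_ge0 (x - U *m y).
rewrite !(vdotDl, vdotDr, vdotNl, vdotNr) (vdotC (U *m y) x) xUy UyUy => h.
have : vnorm y ^+ 2 <= vnorm x ^+ 2 by rewrite !vnorm_sqr; lra.
by rewrite ler_pXn2r // ?nnegrE vnorm_ge0.
Qed.

Lemma spnorm_has_ubound a b (A : 'M[R]_(a, b)) :
  has_ubound [set vnorm (A *m v) | v in @usphere R b].
Proof.
exists (Num.sqrt (\sum_i vdot (row i A)^T (row i A)^T)) => _ [v /= v1 <-].
rewrite /vnorm ler_wsqrtr //; apply: ler_sum => i _.
have -> : (A *m v) i 0 = vdot (row i A)^T v.
  by rewrite mxE; apply: eq_bigr => j _; rewrite !mxE.
apply: le_trans (vdot_sqr_le _ _) _.
by rewrite -(vnorm_sqr v) (v1 : vnorm v = 1) expr1n mulr1.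
Qed.

Lemma vnorm_mulmx_le a b (A : 'M[R]_(a, b)) x :
  vnorm (A *m x) <= spnorm A * vnorm x.
Proof.
have [->|x0] := eqVneq x 0; first by rewrite mulmx0 !vnorm0 mulr0.
have nx_gt0 : 0 < vnorm x by rewrite vnorm_gt0.
set v := (vnorm x)^-1 *: x.
have v1 : usphere v by rewrite /usphere /= vnormZ ger0_norm ?mulVf ?invr_ge0 ?gt_eqF ?ltW.
have -> : A *m x = vnorm x *: (A *m v) by rewrite -scalemxAr scalerA divff ?scale1r ?gt_eqF.
rewrite vnormZ ger0_norm ?vnorm_ge0 // mulrC ler_pM2r //.
by apply: ub_le_sup; [exact: spnorm_has_ubound | exists v].
Qed.

Lemma smin_le a b (A : 'M[R]_(a, b)) v : usphere v -> smin A <= vnorm (A *m v).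
Proof.
move=> v1; apply: ge_inf; last by exists v.
by exists 0 => _ [w _ <-]; apply: vnorm_ge0.
Qed.

Lemma le_smin a b (A : 'M[R]_(a, b)) c : (exists v, @usphere R b v) ->
  (forall v, usphere v -> c <= vnorm (A *m v)) -> c <= smin A.
Proof.
move=> [v v1] h; apply: lb_le_inf; first by exists (vnorm (A *m v)), v.
by move=> _ [w w1 <-]; apply: h.
Qed.

Lemma smin_usphere0 a b (A : 'M[R]_(a, b)) : ~ (exists v, @usphere R b v) -> smin A = 0.
Proof.
move=> no_v; rewrite /smin; suff -> : @usphere R b = set0 by rewrite image_set0 inf0.
by apply/seteqP; split => // v v1; apply: no_v; exists v.
Qed.

Lemma unitmx_spnorm_subr1 k (B : 'M[R]_k) : spnorm (B - 1%:M) < 1 -> B \in unitmx.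
Proof.
move=> hB; apply: contraT; rewrite unitmxE unitfE negbK -det_tr => /det0P[v v0 vB].
have v0' : v^T != 0 by apply: contra v0 => /eqP/(congr1 trmx); rewrite trmxK trmx0 => ->.
have Bv : vnorm ((B - 1%:M) *m v^T) = vnorm v^T.
  by rewrite mulmxBl mul1mx -[B]trmxK -trmx_mul vB trmx0 sub0r vnormN.
have := vnorm_mulmx_le (B - 1%:M) v^T; rewrite Bv.
by have := vnorm_gt0 v^T; rewrite v0' => /idP; nra.
Qed.

(* With w := B^-1 u, polarising ||u - w||^2 = ||(B - 1) w||^2 <= e^2 ||w||^2 and using
   ||u|| <= (1 + e) ||w|| gives 2 <u, w> >= ||u||^2 + (1 - e) / (1 + e) ||u||^2. *)
Lemma vdot_invmx_ge k (B : 'M[R]_k) e u : 0 <= e < 1 -> spnorm (B - 1%:M) <= e ->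
  vnorm u ^+ 2 / (1 + e) <= vdot u (invmx B *m u).
Proof.
case/andP=> e_ge0 e_lt1 hB.
have B_unit : B \in unitmx by apply: unitmx_spnorm_subr1; apply: le_lt_trans e_lt1.
set w := invmx B *m u.
have uw : u - w = (B - 1%:M) *m w by rewrite mulmxBl mul1mx mulmxA mulmxV ?mul1mx.
have r_le : vnorm (u - w) <= e * vnorm w.
  by rewrite uw; apply: le_trans (vnorm_mulmx_le _ _) _; rewrite ler_wpM2r ?vnorm_ge0.
have u_le : vnorm u <= vnorm w + vnorm (u - w).
  by have := ler_vnormD w (u - w); rewrite addrC subrK.
have polar : vnorm (u - w) ^+ 2 = vnorm u ^+ 2 - 2 * vdot u w + vnorm w ^+ 2.
  by rewrite !vnorm_sqr !(vdotDl, vdotDr, vdotNl, vdotNr) (vdotC w u); ring.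
rewrite ler_pdivrMr ?ltr_wpDr //.
have r2 : vnorm (u - w) ^+ 2 <= e ^+ 2 * vnorm w ^+ 2.
  by rewrite -exprMn ler_pXn2r ?nnegrE ?mulr_ge0 ?vnorm_ge0.
have u2 : vnorm u ^+ 2 <= (1 + e) ^+ 2 * vnorm w ^+ 2.
  rewrite -exprMn ler_pXn2r ?nnegrE ?mulr_ge0 ?vnorm_ge0 ?addr_ge0 //.
  by apply: le_trans u_le _; rewrite mulrDl mul1r lerD2l.
have : (1 - e) * vnorm u ^+ 2 <= (1 - e) * ((1 + e) ^+ 2 * vnorm w ^+ 2).
  by rewrite ler_wpM2l // subr_ge0 ltW.
nra.
Qed.

End EuclideanGeometry.

Lemma f1_half_sqr_le (R : realType) (e1 e2 s t : R) :
  0 <= e1 < 1 -> 0 <= e2 -> 0 <= s <= 1 -> 2 * f1 e1 e2 <= s ^+ 2 -> s - e2 <= t ->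
  s ^+ 2 / 2 <= t ^+ 2 / (1 + e1).
Proof.
case/andP=> e1_ge0 e1_lt1 e2_ge0 /andP[s_ge0 s_le1].
rewrite /f1 mulrA ler_pdivrMr ?subr_gt0 // => hs st.
have e2_le_s : e2 <= s by nra.
rewrite ler_pdivlMr ?ltr_wpDr // mulrAC ler_pdivrMr //; nra.
Qed.

Lemma smin_sketched_gram_ge (R : realType) p k (B : 'M[R]_k) (C G : 'M[R]_(k, p))
    (e1 e2 : R) :
  0 <= e1 < 1 -> 0 <= e2 -> spnorm (B - 1%:M) <= e1 -> spnorm (C - G) <= e2 ->
  (forall v, vnorm (G *m v) <= vnorm v) -> 2 * f1 e1 e2 <= smin G ^+ 2 ->
  smin G ^+ 2 / 2 <= smin (C^T *m invmx B *m C).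
Proof.
move=> he1 e2_ge0 hB hCG G_le hs.
have [sphere|no_v] := pselect (exists v, @usphere R p v); last first.
  by rewrite !smin_usphere0 // expr2 !mul0r.
have s_ge0 : 0 <= smin G by apply: le_smin sphere _ => v _; apply: vnorm_ge0.
have s_le1 : smin G <= 1.
  by case: sphere => v v1; rewrite -v1; apply: le_trans (smin_le _ v1) (G_le _).
apply: le_smin sphere _ => v v1.
have Cv_ge : smin G - e2 <= vnorm (C *m v).
  have GCv : G *m v = C *m v + (G - C) *m v by rewrite mulmxBl addrC subrK.
  have : vnorm ((G - C) *m v) <= e2.
    by rewrite -opprB mulNmx vnormN; apply: le_trans (vnorm_mulmx_le _ _) _; rewrite v1 mulr1.
  have := smin_le G v1; have := ler_vnormD (C *m v) ((G - C) *m v); rewrite -GCv; lra.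
have quad_le : vdot v (C^T *m invmx B *m C *m v) <= vnorm (C^T *m invmx B *m C *m v).
  by have := vdot_le_vnorm v (C^T *m invmx B *m C *m v); rewrite (v1 : vnorm v = 1) mul1r.
apply: le_trans quad_le; rewrite -!mulmxA -vdot_mulmxl.
apply: le_trans (vdot_invmx_ge _ he1 hB).
by apply: (f1_half_sqr_le he1 e2_ge0 _ hs Cv_ge); apply/andP.
Qed.

Theorem lemmaB5 (R : realType) (n p q m : nat)
  (y : 'cV[R]_n) (X : 'M[R]_(n, p)) (Z : 'M[R]_(n, q))
  (UX : 'M[R]_(n, p)) (SX VX : 'M[R]_p)
  (UZ : 'M[R]_(n, q)) (SZ VZ : 'M[R]_q)
  (hZ : Z^T *m Z \in unitmx)
  (hXZ : X^T *m projmx Z *m X \in unitmx)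
  (hsvdX : thin_svd X UX SX VX) (hsvdZ : thin_svd Z UZ SZ VZ)
  (e1 e2 e3 delta : R)
  (he1 : 0 < e1 < 1/2) (he2 : 0 < e2 < 1/2) (he3 : 0 < e3 < 1/2)
  (hdelta : 0 < delta < 1/2)
  (d : measure_display) (T : measurableType d) (P : probability T R)
  (Pi : T -> 'M[R]_(m, n)) :
  let beta := invmx (X^T *m projmx Z *m X) *m X^T *m projmx Z *m y in
  let e := y - X *m beta in
  (exists E : set T, [/\ measurable E, (P E >= (1 - delta)%:E)%E &
     forall w, E w ->
       [/\ spnorm (UZ^T *m (Pi w)^T *m Pi w *m UZ - 1%:M) <= e1,
           spnorm (UZ^T *m (Pi w)^T *m Pi w *m UX - UZ^T *m UX) <= e2 &
           vnorm (UZ^T *m (Pi w)^T *m Pi w *m e - UZ^T *m e) <= e3 * vnorm e]]) ->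
  smin (UZ^T *m UX) ^+ 2 >= 2 * f1 e1 e2 ->
  exists F : set T, [/\ measurable F, (P F >= (1 - delta)%:E)%E &
    forall w, F w ->
      smin (UX^T *m (Pi w)^T *m Pi w *m UZ
              *m invmx (UZ^T *m (Pi w)^T *m Pi w *m UZ)
              *m UZ^T *m (Pi w)^T *m Pi w *m UX)
      >= smin (UZ^T *m UX) ^+ 2 / 2].
Proof.
move=> beta e [E [mE PE hE]] hs; exists E; split => // w /hE[hB hCG _].
case: hsvdX => _ UX_orth _ _ _; case: hsvdZ => _ UZ_orth _ _ _.
set B := UZ^T *m (Pi w)^T *m Pi w *m UZ in hB *.
set C := UZ^T *m (Pi w)^T *m Pi w *m UX in hCG.
have -> : UX^T *m (Pi w)^T *m Pi w *m UZ *m invmx B *m UZ^T *m (Pi w)^T *m Pi w *m UX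
    = C^T *m invmx B *m C by rewrite !trmx_mul !trmxK !mulmxA.
apply: smin_sketched_gram_ge hB hCG _ hs.
- by case/andP: he1 => e1_gt0 e1_lt; lra.
- by case/andP: he2 => /ltW.
- move=> v; rewrite -mulmxA -(vnorm_isometry v UX_orth).
  exact: vnorm_trmx_orthonormal_le.
Qed.
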